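(* Let $s\ge2$ and let $\varrho\in C^s(\mathbb A,\mathbb R)$, $\mathbb A=\mathbb T^1\times[0,1]$, satisfy $\varrho(\xi,0)=\varrho(\xi,1)=0$ for all $\xi$, with $\|\varrho\|_{C^s}$ sufficiently small. Then there is a unique map $F_\varrho\in C^s(\mathbb A,\mathbb A)$ which fixes every point of $\{\eta=0\}$ and has the form $F_\varrho(\xi,\eta)=(\xi^+,\eta^+)$ with $$\xi^+=\xi+\eta+\varrho(\xi,\eta)\pmod1,\qquad \eta^+=\eta+\varrho(\xi,\eta)+\varrho(\xi^+,\eta^+).$$ Moreover $F_\varrho(\xi,1)=(\xi,1)$ and $F_\varrho^{-1}(\xi,\eta)=(\xi^-,\eta^-)$ with $\xi^-=\xi-\eta+\varrho(\xi,\eta)\pmod1$ and $\eta^-=\eta-\varrho(\xi,\eta)-\varrho(\xi^-,\eta^-)$.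
   Context: $\mathbb T^1=\mathbb R/\mathbb Z$; $(\xi,\eta)$ are the natural coordinates on $\mathbb A=\mathbb T^1\times[0,1]$. *)

From Stdlib Require Import Reals Lra Lia ZArith.
Open Scope R_scope.

Definition in01 (y : R) : Prop := 0 <= y <= 1.

(* Points of T^1 = R/Z are represented by real numbers; equality in T^1 is
   congruence modulo 1. *)
Definition eqmod1 (x y : R) : Prop := exists k : Z, x - y = IZR k.

(* The annulus A = T^1 x [0,1] is represented through its universal cover,
   the strip S = R x [0,1]. *)

Definition cont_strip (f : R -> R -> R) : Prop :=
  forall x y, in01 y ->
  forall eps, 0 < eps -> exists del, 0 < del /\
    forall x' y', in01 y' -> Rabs (x' - x) < del -> Rabs (y' - y) < del ->
      Rabs (f x' y' - f x y) < eps.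

Definition pdx (f : R -> R -> R) (x y d : R) : Prop :=
  forall eps, 0 < eps -> exists del, 0 < del /\
    forall h, h <> 0 -> Rabs h < del ->
      Rabs ((f (x + h) y - f x y) / h - d) < eps.

Definition pdy (f : R -> R -> R) (x y d : R) : Prop :=
  forall eps, 0 < eps -> exists del, 0 < del /\
    forall h, h <> 0 -> Rabs h < del -> in01 (y + h) ->
      Rabs ((f x (y + h) - f x y) / h - d) < eps.

Definition Cs_jet (s : nat) (f : R -> R -> R) (D : nat -> nat -> R -> R -> R)
  : Prop :=
  (forall x y, in01 y -> D 0%nat 0%nat x y = f x y) /\
  (forall i j, (i + j <= s)%nat -> cont_strip (D i j)) /\
  (forall i j, (i + j < s)%nat -> forall x y, in01 y ->
      pdx (D i j) x y (D (S i) j x y) /\ pdy (D i j) x y (D i (S j) x y)).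

Definition Cs (s : nat) (f : R -> R -> R) : Prop := exists D, Cs_jet s f D.

(* A map A -> A, given through a lift F : R x [0,1] -> R x [0,1]
   (first component = xi-coordinate lifted to R). *)
Definition Amap (F : R -> R -> R * R) : Prop :=
  forall x y, in01 y ->
    in01 (snd (F x y)) /\
    eqmod1 (fst (F (x + 1) y)) (fst (F x y)) /\
    snd (F (x + 1) y) = snd (F x y).

Definition Cs_Amap (s : nat) (F : R -> R -> R * R) : Prop :=
  Amap F /\ Cs s (fun x y => fst (F x y)) /\ Cs s (fun x y => snd (F x y)).

Definition Apt_eq (p q : R * R) : Prop :=
  eqmod1 (fst p) (fst q) /\ snd p = snd q.

Definition Amap_eq (F G : R -> R -> R * R) : Prop :=
  forall x y, in01 y -> Apt_eq (F x y) (G x y).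

(* A function on A = T^1 x [0,1]: 1-periodic in xi. *)
Definition periodic1 (rho : R -> R -> R) : Prop :=
  forall x y, in01 y -> rho (x + 1) y = rho x y.

Definition is_F (s : nat) (rho : R -> R -> R) (F : R -> R -> R * R) : Prop :=
  Cs_Amap s F /\
  (forall x, Apt_eq (F x 0) (x, 0)) /\
  (forall x y, in01 y ->
     eqmod1 (fst (F x y)) (x + y + rho x y) /\
     snd (F x y) = y + rho x y + rho (fst (F x y)) (snd (F x y))).

From Stdlib Require Import Reals Lra Lia ZArith.
From Stdlib Require Import Classical ClassicalEpsilon.
From Coquelicot Require Coquelicot.
Open Scope R_scope.

(* The η-component of F_ρ is the solution t of the fixed-point equation
   t = c + ρ(X, t), where c = η + ρ(ξ,η) and X = ξ + η + ρ(ξ,η).  Because ρ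
   vanishes on the boundary circles, t ↦ t - c - ρ(X, t) changes sign on
   [0,1], so a solution exists by the intermediate value theorem; because
   ∂_η ρ is small, t ↦ c + ρ(X, t) is a contraction, so it is unique.
   Uniqueness gives at once the boundary behaviour, periodicity and the
   uniqueness of F_ρ.  The inverse is built the same way with the signs of η
   in ξ⁺ and of ρ in η⁺ reversed; substituting one map into the other
   reproduces the other's fixed-point equation.  Regularity is the implicit function theorem: the partials of t
   are (∂c + ∂_ξρ·∂X) / (1 - ∂_ηρ), so t is C^(k+1) as soon as it is C^k.
   This induction is run on the recursive class "continuous with C^k
   partials"; Schwarz's theorem on mixed partials converts it into the jets of
   the statement. *)

(* [N del] is the neighbourhood of radius [del]; [tends_to N] is the limit
   along the filter base they generate. *)
Definition tends_to {I : Type} (N : R -> I -> Prop) (g : I -> R) (l : R) :=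
  forall eps, 0 < eps -> exists del, 0 < del /\
    forall i, N del i -> Rabs (g i - l) < eps.

Definition shrinking {I : Type} (N : R -> I -> Prop) :=
  forall d1 d2 i, d1 <= d2 -> N d1 i -> N d2 i.

Section Limits.

Context {I : Type} (N : R -> I -> Prop) (HN : shrinking N).

Lemma tends_to_ext g k l :
  (forall d i, N d i -> g i = k i) -> tends_to N g l -> tends_to N k l.
Proof.
  intros E H eps He. destruct (H eps He) as [d [Hd A]].
  exists d; split; auto. intros i Hi. rewrite <- (E d i Hi). auto.
Qed.

Lemma tends_to_const c : tends_to N (fun _ => c) c.
Proof.
  intros eps He; exists 1; split; [lra|].
  intros; rewrite Rminus_diag, Rabs_R0; auto.
Qed.

Lemma tends_to_both g k l m eps :
  tends_to N g l -> tends_to N k m -> 0 < eps ->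
  exists d, 0 < d /\
    forall i, N d i -> Rabs (g i - l) < eps /\ Rabs (k i - m) < eps.
Proof.
  intros H1 H2 He.
  destruct (H1 eps He) as [d1 [Hd1 A]]. destruct (H2 eps He) as [d2 [Hd2 B]].
  exists (Rmin d1 d2); split; [apply Rmin_glb_lt; auto|].
  intros i Hi; split; [apply A | apply B]; eapply HN; eauto;
    [apply Rmin_l | apply Rmin_r].
Qed.

Lemma tends_to_plus g k l m :
  tends_to N g l -> tends_to N k m -> tends_to N (fun i => g i + k i) (l + m).
Proof.
  intros H1 H2 eps He.
  destruct (tends_to_both g k l m (eps/2) H1 H2) as [d [Hd A]]; [lra|].
  exists d; split; auto. intros i Hi. destruct (A i Hi).
  replace (g i + k i - (l + m)) with ((g i - l) + (k i - m)) by ring.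
  eapply Rle_lt_trans; [apply Rabs_triang|]. lra.
Qed.

Lemma tends_to_opp g l : tends_to N g l -> tends_to N (fun i => - g i) (- l).
Proof.
  intros H eps He. destruct (H eps He) as [d [Hd A]]. exists d; split; auto.
  intros i Hi. replace (- g i - - l) with (- (g i - l)) by ring.
  rewrite Rabs_Ropp; auto.
Qed.

Lemma tends_to_mult g k l m :
  tends_to N g l -> tends_to N k m -> tends_to N (fun i => g i * k i) (l * m).
Proof.
  intros H1 H2 eps He.
  pose proof (Rabs_pos l); pose proof (Rabs_pos m).
  set (e := Rmin 1 (eps / (1 + Rabs l + Rabs m))).
  assert (He0 : 0 < e) by (apply Rmin_glb_lt; [lra|apply Rdiv_lt_0_compat; lra]).
  assert (He1 : e <= 1) by apply Rmin_l.
  assert (He2 : e * (1 + Rabs l + Rabs m) <= eps).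
  { assert (e <= eps / (1 + Rabs l + Rabs m)) by apply Rmin_r.
    apply Rmult_le_compat_r with (r := 1 + Rabs l + Rabs m) in H3; [|lra].
    unfold Rdiv in H3. rewrite Rmult_assoc, Rinv_l in H3; lra. }
  destruct (tends_to_both g k l m e H1 H2 He0) as [d [Hd A]].
  exists d; split; auto. intros i Hi. destruct (A i Hi) as [A1 A2].
  replace (g i * k i - l * m)
    with ((g i - l) * (k i - m) + l * (k i - m) + m * (g i - l)) by ring.
  pose proof (Rabs_pos (g i - l)); pose proof (Rabs_pos (k i - m)).
  eapply Rle_lt_trans; [apply Rabs_triang|].
  eapply Rle_lt_trans; [apply Rplus_le_compat_r; apply Rabs_triang|].
  rewrite !Rabs_mult. nra.
Qed.

Lemma tends_to_inv g l : l <> 0 -> tends_to N g l -> tends_to N (fun i => / g i) (/ l).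
Proof.
  intros Hl H eps He.
  assert (Hal : 0 < Rabs l) by (apply Rabs_pos_lt; auto).
  set (e := Rmin (Rabs l / 2) (eps * Rabs l * Rabs l / 2)).
  assert (He0 : 0 < e).
  { apply Rmin_glb_lt; [lra|].
    assert (0 < eps * Rabs l * Rabs l) by (repeat apply Rmult_lt_0_compat; auto). lra. }
  destruct (H e He0) as [d [Hd A]]. exists d; split; auto. intros i Hi.
  specialize (A i Hi). rewrite <- Rabs_Ropp, Ropp_minus_distr in A.
  assert (E1 : e <= Rabs l / 2) by apply Rmin_l.
  assert (E2 : e <= eps * Rabs l * Rabs l / 2) by apply Rmin_r.
  assert (Hg : Rabs l / 2 <= Rabs (g i)).
  { pose proof (Rabs_triang_inv l (l - g i)).
    replace (l - (l - g i)) with (g i) in H0 by ring. lra. }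
  assert (Hg0 : g i <> 0) by (intro Z; rewrite Z, Rabs_R0 in Hg; lra).
  replace (/ g i - / l) with ((l - g i) * / (g i * l)) by (field; auto).
  rewrite Rabs_mult, Rabs_inv, Rabs_mult.
  assert (0 < Rabs (g i) * Rabs l) by (apply Rmult_lt_0_compat; lra).
  apply Rmult_lt_reg_r with (Rabs (g i) * Rabs l); auto.
  rewrite Rmult_assoc, Rinv_l, Rmult_1_r by lra. nra.
Qed.

Lemma tends_to_le g k l m :
  (forall d i, N d i -> Rabs (g i - l) <= Rabs (k i - m)) ->
  tends_to N k m -> tends_to N g l.
Proof.
  intros S H eps He. destruct (H eps He) as [d [Hd A]]. exists d; split; auto.
  intros i Hi. eapply Rle_lt_trans; eauto.
Qed.

Lemma tends_to_comp_strip f p q x0 y0 :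
  cont_strip f -> tends_to N p x0 -> tends_to N q y0 -> in01 y0 ->
  (forall d i, N d i -> in01 (q i)) ->
  tends_to N (fun i => f (p i) (q i)) (f x0 y0).
Proof.
  intros Hf H1 H2 Hy Hq eps He. destruct (Hf x0 y0 Hy eps He) as [d0 [Hd0 A]].
  destruct (tends_to_both p q x0 y0 d0 H1 H2 Hd0) as [d [Hd B]].
  exists d; split; auto. intros i Hi. destruct (B i Hi). apply A; eauto.
Qed.

End Limits.

Definition punctured (P : R -> Prop) : R -> R -> Prop :=
  fun del h => P h /\ h <> 0 /\ Rabs h < del.

Lemma shrinking_punctured P : shrinking (punctured P).
Proof. intros d1 d2 h Hd [A [B C]]; repeat split; auto; lra. Qed.

(* [phi] has derivative [l] at 0 along the increments allowed by [P];
   [phi0] stands for [phi 0], at which [phi] itself is never evaluated. *)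
Definition is_deriv0 P (phi : R -> R) phi0 l :=
  tends_to (punctured P) (fun h => (phi h - phi0) / h) l.

Section Derivatives.

Variable P : R -> Prop.
Let HP := shrinking_punctured P.

Lemma is_deriv0_cont phi phi0 l :
  is_deriv0 P phi phi0 l -> tends_to (punctured P) phi phi0.
Proof.
  intros H.
  assert (Hid : tends_to (punctured P) (fun h => h) 0).
  { intros eps He; exists eps; split; auto.
    intros h [_ [_ C]]. rewrite Rminus_0_r; auto. }
  assert (B := tends_to_plus _ HP _ _ _ _ (tends_to_const _ phi0)
                 (tends_to_mult _ HP _ _ _ _ Hid H)).
  rewrite Rmult_0_l, Rplus_0_r in B. eapply tends_to_ext; [|exact B].
  intros d h [_ [Hh _]]. field; auto.
Qed.

Lemma is_deriv0_const c : is_deriv0 P (fun _ => c) c 0.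
Proof.
  eapply tends_to_ext; [|apply (tends_to_const _ 0)].
  intros d h [_ [Hh _]]. field; auto.
Qed.

Lemma is_deriv0_shift x : is_deriv0 P (fun h => x + h) x 1.
Proof.
  eapply tends_to_ext; [|apply (tends_to_const _ 1)].
  intros d h [_ [Hh _]]. field; auto.
Qed.

Lemma is_deriv0_plus phi psi a b l m :
  is_deriv0 P phi a l -> is_deriv0 P psi b m ->
  is_deriv0 P (fun h => phi h + psi h) (a + b) (l + m).
Proof.
  intros H1 H2. eapply tends_to_ext; [|apply (tends_to_plus _ HP _ _ _ _ H1 H2)].
  intros d h [_ [Hh _]]. field; auto.
Qed.

Lemma is_deriv0_opp phi a l :
  is_deriv0 P phi a l -> is_deriv0 P (fun h => - phi h) (- a) (- l).
Proof.
  intros H. eapply tends_to_ext; [|apply (tends_to_opp _ _ _ H)].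
  intros d h [_ [Hh _]]. field; auto.
Qed.

Lemma is_deriv0_mult phi psi a b l m :
  is_deriv0 P phi a l -> is_deriv0 P psi b m ->
  is_deriv0 P (fun h => phi h * psi h) (a * b) (l * b + a * m).
Proof.
  intros H1 H2.
  assert (A := tends_to_mult _ HP _ _ _ _ H1 (is_deriv0_cont _ _ _ H2)).
  assert (B := tends_to_mult _ HP _ _ _ _ (tends_to_const _ a) H2).
  eapply tends_to_ext; [|apply (tends_to_plus _ HP _ _ _ _ A B)].
  intros d h [_ [Hh _]]. field; auto.
Qed.

Lemma is_deriv0_inv phi a l :
  a <> 0 -> (forall h, P h -> h <> 0 -> phi h <> 0) -> is_deriv0 P phi a l ->
  is_deriv0 P (fun h => / phi h) (/ a) (- (l * / a * / a)).
Proof.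
  intros Ha Hn H.
  assert (A := tends_to_inv _ _ _ Ha (is_deriv0_cont _ _ _ H)).
  assert (B := tends_to_mult _ HP _ _ _ _ (tends_to_mult _ HP _ _ _ _ H A)
                 (tends_to_const _ (/ a))).
  eapply tends_to_ext; [|apply (tends_to_opp _ _ _ B)].
  intros d h [Ph [Hh _]]. specialize (Hn h Ph Hh). field; auto.
Qed.

End Derivatives.

Lemma pdx_is_deriv0 f x y d :
  pdx f x y d <-> is_deriv0 (fun _ => True) (fun h => f (x + h) y) (f x y) d.
Proof.
  split; intros H eps He; destruct (H eps He) as [del [Hd A]];
    exists del; split; auto.
  - intros h [_ [B C]]. auto.
  - intros h B C. apply (A h); repeat split; auto.
Qed.

Lemma pdy_is_deriv0 f x y d :
  pdy f x y d <->
  is_deriv0 (fun h => in01 (y + h)) (fun h => f x (y + h)) (f x y) d.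
Proof.
  split; intros H eps He; destruct (H eps He) as [del [Hd A]];
    exists del; split; auto.
  - intros h [D [B C]]. auto.
  - intros h B C D. apply (A h). split; [exact D | split; assumption].
Qed.

Definition strip_nbhd (x y : R) : R -> R * R -> Prop :=
  fun del p => in01 (snd p) /\ Rabs (fst p - x) < del /\ Rabs (snd p - y) < del.

Lemma shrinking_strip_nbhd x y : shrinking (strip_nbhd x y).
Proof. intros d1 d2 p Hd [A [B C]]; split; [exact A | split; lra]. Qed.

Lemma cont_strip_tends_to f :
  cont_strip f <->
  forall x y, in01 y -> tends_to (strip_nbhd x y) (fun p => f (fst p) (snd p)) (f x y).
Proof.
  split; intros H x y Hy eps He; destruct (H x y Hy eps He) as [del [Hd A]];
    exists del; split; auto.
  - intros [x' y'] [B [C D]]. auto.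
  - intros x' y' B C D. apply (A (x', y')). split; [exact B | split; assumption].
Qed.

Lemma cont_strip_const c : cont_strip (fun _ _ => c).
Proof. apply cont_strip_tends_to. intros. apply tends_to_const. Qed.

Lemma cont_strip_fst : cont_strip (fun x _ => x).
Proof.
  apply cont_strip_tends_to. intros x y _ eps He. exists eps; split; auto.
  intros p [_ [A _]]; auto.
Qed.

Lemma cont_strip_snd : cont_strip (fun _ y => y).
Proof.
  apply cont_strip_tends_to. intros x y _ eps He. exists eps; split; auto.
  intros p [_ [_ A]]; auto.
Qed.

Lemma cont_strip_section f c : cont_strip f -> cont_strip (fun _ y => f c y).
Proof.
  intros H x y Hy eps He. destruct (H c y Hy eps He) as [d [Hd A]].
  exists d; split; auto. intros x' y' Hy' _ B. apply A; auto.
  rewrite Rminus_diag, Rabs_R0; auto.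
Qed.

Lemma cont_strip_plus f g :
  cont_strip f -> cont_strip g -> cont_strip (fun x y => f x y + g x y).
Proof.
  rewrite !cont_strip_tends_to. intros A B x y Hy.
  apply (tends_to_plus _ (shrinking_strip_nbhd x y)); auto.
Qed.

Lemma cont_strip_opp f : cont_strip f -> cont_strip (fun x y => - f x y).
Proof. rewrite !cont_strip_tends_to. intros A x y Hy. apply tends_to_opp; auto. Qed.

Lemma cont_strip_mult f g :
  cont_strip f -> cont_strip g -> cont_strip (fun x y => f x y * g x y).
Proof.
  rewrite !cont_strip_tends_to. intros A B x y Hy.
  apply (tends_to_mult _ (shrinking_strip_nbhd x y)); auto.
Qed.

Lemma cont_strip_inv f c :
  0 < c -> (forall x y, in01 y -> c <= f x y) -> cont_strip f ->
  cont_strip (fun x y => / f x y).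
Proof.
  intros Hc Hb. rewrite !cont_strip_tends_to. intros A x y Hy.
  apply tends_to_inv; auto. specialize (Hb x y Hy). lra.
Qed.

Lemma cont_strip_comp f X T :
  cont_strip f -> cont_strip X -> cont_strip T ->
  (forall x y, in01 y -> in01 (T x y)) -> cont_strip (fun x y => f (X x y) (T x y)).
Proof.
  intros Hf HX HT HI. rewrite cont_strip_tends_to in HX, HT |- *. intros x y Hy.
  apply (tends_to_comp_strip _ (shrinking_strip_nbhd x y)); auto.
  intros d p [A _]; auto.
Qed.

Lemma cont_strip_ext f g :
  (forall x y, in01 y -> f x y = g x y) -> cont_strip f -> cont_strip g.
Proof.
  intros E H x y Hy eps He. destruct (H x y Hy eps He) as [d [Hd A]].
  exists d; split; auto. intros. rewrite <- !E; auto.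
Qed.

(** * Mean value theorems on the strip *)

Lemma pdx_derivable_pt_lim f x y d : pdx f x y d -> derivable_pt_lim (fun s => f s y) x d.
Proof.
  intros H eps He. destruct (H eps He) as [del [Hd A]].
  exists (mkposreal del Hd). intros h Hh Hl. apply A; auto.
Qed.

Lemma mvt_R (g g' : R -> R) :
  (forall s, derivable_pt_lim g s (g' s)) ->
  forall a b, exists c, Rmin a b <= c <= Rmax a b /\ g b - g a = g' c * (b - a).
Proof.
  intros H a b. apply Coquelicot.Derive.MVT_gen.
  - intros x _. apply Coquelicot.Derive.is_derive_Reals. auto.
  - intros x _. apply derivable_continuous_pt. exists (g' x). apply H.
Qed.

Lemma in01_0 : in01 0.
Proof. unfold in01; lra. Qed.

Lemma in01_1 : in01 1.
Proof. unfold in01; lra. Qed.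

Definition clamp01 t := Rmax 0 (Rmin 1 t).

Lemma clamp01_id t : in01 t -> clamp01 t = t.
Proof. unfold clamp01, in01, Rmax, Rmin; intros; repeat destruct Rle_dec; lra. Qed.

Lemma clamp01_in01 t : in01 (clamp01 t).
Proof. unfold clamp01, in01, Rmax, Rmin; intros; repeat destruct Rle_dec; lra. Qed.

Lemma clamp01_lip u v : Rabs (clamp01 u - clamp01 v) <= Rabs (u - v).
Proof.
  unfold clamp01, Rmax, Rmin; repeat destruct Rle_dec;
    unfold Rabs; repeat destruct Rcase_abs; lra.
Qed.

Lemma in01_between a b c : in01 a -> in01 b -> Rmin a b <= c <= Rmax a b -> in01 c.
Proof. unfold in01, Rmin, Rmax; destruct Rle_dec; lra. Qed.

Lemma Rabs_between a b c : Rmin a b <= c <= Rmax a b -> Rabs (c - a) <= Rabs (b - a).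
Proof. unfold Rmin, Rmax; destruct Rle_dec; unfold Rabs; repeat destruct Rcase_abs; lra. Qed.

Lemma mvt_unit_interval (g g' : R -> R) :
  cont_strip (fun _ t => g t) ->
  (forall t, 0 < t < 1 -> pdy (fun _ t => g t) 0 t (g' t)) ->
  forall a b, in01 a -> in01 b ->
  exists c, Rmin a b <= c <= Rmax a b /\ g b - g a = g' c * (b - a).
Proof.
  intros Hc Hd a b Ha Hb.
  destruct (Coquelicot.Derive.MVT_gen (fun t => g (clamp01 t)) a b g')
    as [c [Hc1 Hc2]].
  - intros x Hx. apply Coquelicot.Derive.is_derive_Reals.
    assert (Hx1 : 0 < x < 1) by (unfold in01, Rmin, Rmax in *; destruct Rle_dec; lra).
    intros eps He. destruct (Hd x Hx1 eps He) as [del [Hdel A]].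
    assert (Hp : 0 < Rmin del (Rmin x (1 - x))) by (repeat apply Rmin_glb_lt; lra).
    exists (mkposreal _ Hp). simpl. intros h Hh Hl.
    pose proof (Rmin_l del (Rmin x (1-x))); pose proof (Rmin_r del (Rmin x (1-x))).
    pose proof (Rmin_l x (1-x)); pose proof (Rmin_r x (1-x)).
    assert (in01 (x + h)) by (unfold in01; unfold Rabs in Hl; destruct Rcase_abs; lra).
    rewrite (clamp01_id (x + h)), (clamp01_id x) by (auto; unfold in01; lra).
    apply A; auto; lra.
  - intros x Hx. assert (Hx1 : in01 x) by exact (in01_between _ _ _ Ha Hb Hx).
    intros eps He. destruct (Hc 0 x Hx1 eps He) as [d [Hd0 A]].
    exists d; split; auto. intros z [_ Hz]. change (Rabs (z - x) < d) in Hz.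
    pose proof (clamp01_lip z x). rewrite (clamp01_id x Hx1) in *.
    apply (A 0); [apply clamp01_in01 | rewrite Rminus_diag, Rabs_R0 | ]; lra.
  - exists c; split; auto. rewrite !clamp01_id in Hc2 by auto. auto.
Qed.

Definition partials (f a b : R -> R -> R) :=
  forall x y, in01 y -> pdx f x y (a x y) /\ pdy f x y (b x y).

Lemma mvt_strip f a b : cont_strip f -> partials f a b ->
  forall u0 u1 t0 t1, in01 t0 -> in01 t1 ->
  exists xi tau, Rmin u0 u1 <= xi <= Rmax u0 u1 /\ Rmin t0 t1 <= tau <= Rmax t0 t1 /\
    f u1 t1 - f u0 t0 = a xi t1 * (u1 - u0) + b u0 tau * (t1 - t0).
Proof.
  intros Hc Hp u0 u1 t0 t1 H0 H1.
  destruct (mvt_R (fun s => f s t1) (fun s => a s t1)) with (a := u0) (b := u1)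
    as [xi [X1 X2]].
  { intros s. apply pdx_derivable_pt_lim, Hp; auto. }
  destruct (mvt_unit_interval (f u0) (b u0)) with (a := t0) (b := t1)
    as [tau [T1 T2]]; auto.
  { apply cont_strip_section; auto. }
  { intros t Ht. apply (Hp u0 t). unfold in01; lra. }
  exists xi, tau. split; [lra|split; [lra|]].
  replace (f u1 t1 - f u0 t0) with ((f u1 t1 - f u0 t1) + (f u0 t1 - f u0 t0)) by ring.
  rewrite X2, T2. ring.
Qed.

Lemma partials_lip_x f a b K : cont_strip f -> partials f a b ->
  (forall x y, in01 y -> Rabs (a x y) <= K) ->
  forall u1 u2 t, in01 t -> Rabs (f u1 t - f u2 t) <= K * Rabs (u1 - u2).
Proof.
  intros Hc Hp HK u1 u2 t Ht.
  destruct (mvt_strip f a b Hc Hp u2 u1 t t Ht Ht) as [xi [tau [_ [_ E]]]].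
  rewrite E, Rminus_diag, Rmult_0_r, Rplus_0_r, Rabs_mult.
  apply Rmult_le_compat_r; [apply Rabs_pos | auto].
Qed.

Lemma partials_lip_y f a b L : cont_strip f -> partials f a b ->
  (forall x y, in01 y -> Rabs (b x y) <= L) ->
  forall u t1 t2, in01 t1 -> in01 t2 -> Rabs (f u t1 - f u t2) <= L * Rabs (t1 - t2).
Proof.
  intros Hc Hp HL u t1 t2 H1 H2.
  destruct (mvt_strip f a b Hc Hp u u t2 t1 H2 H1) as [xi [tau [_ [T E]]]].
  rewrite E, Rminus_diag, Rmult_0_r, Rplus_0_l, Rabs_mult.
  apply Rmult_le_compat_r; [apply Rabs_pos|].
  apply HL. exact (in01_between _ _ _ H2 H1 T).
Qed.

Section ChainRule.

Variables (P : R -> Prop) (f a b : R -> R -> R).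
Hypotheses (f_cont : cont_strip f) (f_partials : partials f a b)
  (a_cont : cont_strip a) (b_cont : cont_strip b).
Let HP := shrinking_punctured P.

Lemma mvt_along p q p0 q0 :
  tends_to (punctured P) p p0 -> tends_to (punctured P) q q0 -> in01 q0 ->
  (forall h, P h -> in01 (q h)) ->
  exists xi tau : R -> R,
    (forall h, P h -> f (p h) (q h) - f p0 q0 =
                      a (xi h) (q h) * (p h - p0) + b p0 (tau h) * (q h - q0)) /\
    tends_to (punctured P) (fun h => a (xi h) (q h)) (a p0 q0) /\
    tends_to (punctured P) (fun h => b p0 (tau h)) (b p0 q0) /\
    (forall h, P h -> in01 (tau h)).
Proof.
  intros Lp Lq Hq0 Hq.
  destruct (choice (fun h r => P h ->
      Rmin p0 (p h) <= fst r <= Rmax p0 (p h) /\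
      Rmin q0 (q h) <= snd r <= Rmax q0 (q h) /\
      f (p h) (q h) - f p0 q0 = a (fst r) (q h) * (p h - p0) + b p0 (snd r) * (q h - q0)))
    as [F HF].
  { intros h. destruct (classic (P h)) as [Ph|nPh].
    - destruct (mvt_strip f a b f_cont f_partials p0 (p h) q0 (q h) Hq0 (Hq h Ph))
        as [xi [tau E]].
      exists (xi, tau). auto.
    - exists (0, 0). intros; contradiction. }
  assert (Htau : forall h, P h -> in01 (snd (F h))).
  { intros h Ph. destruct (HF h Ph) as [_ [A _]]. exact (in01_between _ _ _ Hq0 (Hq h Ph) A). }
  exists (fun h => fst (F h)), (fun h => snd (F h)). split; [|split; [|split]]; auto.
  - intros h Ph. apply HF; auto.
  - apply (tends_to_comp_strip _ HP); auto.
    + apply (tends_to_le _ _ p _ p0); auto. intros d h [Ph _].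
      destruct (HF h Ph) as [A _]. apply Rabs_between; auto.
    + intros d h [Ph _]; auto.
  - apply (tends_to_comp_strip _ HP); auto.
    + apply tends_to_const.
    + apply (tends_to_le _ _ q _ q0); auto. intros d h [Ph _].
      destruct (HF h Ph) as [_ [A _]]. apply Rabs_between; auto.
    + intros d h [Ph _]. auto.
Qed.

Lemma is_deriv0_comp_strip p q p0 q0 l1 l2 :
  is_deriv0 P p p0 l1 -> is_deriv0 P q q0 l2 -> in01 q0 -> (forall h, P h -> in01 (q h)) ->
  is_deriv0 P (fun h => f (p h) (q h)) (f p0 q0) (a p0 q0 * l1 + b p0 q0 * l2).
Proof.
  intros H1 H2 Hq0 Hq.
  destruct (mvt_along p q p0 q0 (is_deriv0_cont _ _ _ _ H1) (is_deriv0_cont _ _ _ _ H2) Hq0 Hq)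
    as [xi [tau [E [L1 [L2 _]]]]].
  eapply tends_to_ext; [|exact (tends_to_plus _ HP _ _ _ _
      (tends_to_mult _ HP _ _ _ _ L1 H1) (tends_to_mult _ HP _ _ _ _ L2 H2))].
  intros d h [Ph [Hh _]]. rewrite (E h Ph). field; auto.
Qed.

(* Differentiating the implicit relation t = c + f(X, t) along a curve: the
   mean value form gives (Δt)(1 - b(X0, τ)) = Δc + a(ξ, t)·ΔX. *)
Lemma is_deriv0_implicit c X t c0 X0 t0 lc lX :
  (forall x y, in01 y -> b x y < 1) ->
  is_deriv0 P c c0 lc -> is_deriv0 P X X0 lX -> tends_to (punctured P) t t0 ->
  in01 t0 -> (forall h, P h -> in01 (t h)) ->
  t0 = c0 + f X0 t0 -> (forall h, P h -> t h = c h + f (X h) (t h)) ->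
  is_deriv0 P t t0 ((lc + a X0 t0 * lX) * / (1 - b X0 t0)).
Proof.
  intros Hb Hdc HdX Lt Ht0 Ht E0 E.
  destruct (mvt_along X t X0 t0 (is_deriv0_cont _ _ _ _ HdX) Lt Ht0 Ht)
    as [xi [tau [D [L1 [L2 Htau]]]]].
  assert (Hb0 : 1 - b X0 t0 <> 0) by (specialize (Hb X0 t0 Ht0); lra).
  assert (Num := tends_to_plus _ HP _ _ _ _ Hdc (tends_to_mult _ HP _ _ _ _ L1 HdX)).
  assert (Den := tends_to_inv _ _ _ Hb0
                   (tends_to_plus _ HP _ _ _ _ (tends_to_const _ 1) (tends_to_opp _ _ _ L2))).
  eapply tends_to_ext; [|exact (tends_to_mult _ HP _ _ _ _ Num Den)].
  intros d h [Ph [Hh _]]. simpl.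
  assert (Hbt : 1 - b X0 (tau h) <> 0) by (specialize (Hb X0 (tau h) (Htau h Ph)); lra).
  specialize (D h Ph). specialize (E h Ph).
  assert (K : (t h - t0) * (1 - b X0 (tau h)) = (c h - c0) + a (xi h) (t h) * (X h - X0)).
  { rewrite E at 1. rewrite E0 at 1. nra. }
  apply Rmult_eq_reg_r with (h * (1 - b X0 (tau h)));
    [|apply Rmult_integral_contrapositive; auto].
  replace ((t h - t0) / h * (h * (1 - b X0 (tau h))))
    with ((t h - t0) * (1 - b X0 (tau h))) by (field; auto).
  rewrite K. field. auto.
Qed.

End ChainRule.

Fixpoint Ck (k : nat) (f : R -> R -> R) : Prop :=
  match k with
  | O => cont_strip f
  | S k => cont_strip f /\ exists a b, partials f a b /\ Ck k a /\ Ck k b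
  end.

Lemma Ck_cont k f : Ck k f -> cont_strip f.
Proof. destruct k; simpl; tauto. Qed.

Lemma Ck_S k : forall f, Ck (S k) f -> Ck k f.
Proof.
  induction k as [|k IH]; intros f H; [simpl in *; tauto|].
  destruct H as [Hc [a [b [Hp [Ha Hb]]]]].
  split; auto. exists a, b; auto.
Qed.

Lemma Ck_le j k f : (j <= k)%nat -> Ck k f -> Ck j f.
Proof. induction 1; auto. intros Hm. apply IHle, Ck_S; auto. Qed.

Lemma partials_ext f g a b :
  (forall x y, in01 y -> f x y = g x y) -> partials f a b -> partials g a b.
Proof.
  intros E H x y Hy. destruct (H x y Hy) as [Hx' Hy'].
  split; intros eps He;
    [destruct (Hx' eps He) as [del [Hd A]] | destruct (Hy' eps He) as [del [Hd A]]];
    exists del; split; auto; intros; rewrite <- !E; auto.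
Qed.

Lemma Ck_ext k f g : (forall x y, in01 y -> f x y = g x y) -> Ck k f -> Ck k g.
Proof.
  destruct k; simpl; [apply cont_strip_ext|].
  intros E [Hc [a [b [Hp [Ha Hb]]]]]. split; [eapply cont_strip_ext; eauto|].
  exists a, b. split; auto. eapply partials_ext; eauto.
Qed.

Lemma partials_const c : partials (fun _ _ => c) (fun _ _ => 0) (fun _ _ => 0).
Proof. intros x y Hy. rewrite pdx_is_deriv0, pdy_is_deriv0. split; apply is_deriv0_const. Qed.

Lemma partials_fst : partials (fun x _ => x) (fun _ _ => 1) (fun _ _ => 0).
Proof.
  intros x y Hy. rewrite pdx_is_deriv0, pdy_is_deriv0.
  split; [apply is_deriv0_shift | apply is_deriv0_const].
Qed.

Lemma partials_snd : partials (fun _ y => y) (fun _ _ => 0) (fun _ _ => 1).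
Proof.
  intros x y Hy. rewrite pdx_is_deriv0, pdy_is_deriv0.
  split; [apply is_deriv0_const | apply is_deriv0_shift].
Qed.

Lemma partials_plus f g a b c d : partials f a b -> partials g c d ->
  partials (fun x y => f x y + g x y) (fun x y => a x y + c x y) (fun x y => b x y + d x y).
Proof.
  intros H1 H2 x y Hy. destruct (H1 x y Hy) as [A1 B1]. destruct (H2 x y Hy) as [A2 B2].
  rewrite pdx_is_deriv0, pdy_is_deriv0 in *. split; apply is_deriv0_plus; auto.
Qed.

Lemma partials_opp f a b : partials f a b ->
  partials (fun x y => - f x y) (fun x y => - a x y) (fun x y => - b x y).
Proof.
  intros H x y Hy. destruct (H x y Hy) as [A B].
  rewrite pdx_is_deriv0, pdy_is_deriv0 in *. split; apply is_deriv0_opp; auto.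
Qed.

Lemma partials_mult f g a b c d : partials f a b -> partials g c d ->
  partials (fun x y => f x y * g x y) (fun x y => a x y * g x y + f x y * c x y)
           (fun x y => b x y * g x y + f x y * d x y).
Proof.
  intros H1 H2 x y Hy. destruct (H1 x y Hy) as [A1 B1]. destruct (H2 x y Hy) as [A2 B2].
  rewrite pdx_is_deriv0, pdy_is_deriv0 in *. split; apply is_deriv0_mult; auto.
Qed.

Lemma partials_inv f a b c : 0 < c -> (forall x y, in01 y -> c <= f x y) -> partials f a b ->
  partials (fun x y => / f x y) (fun x y => - (a x y * / f x y * / f x y))
           (fun x y => - (b x y * / f x y * / f x y)).
Proof.
  intros Hc Hb H x y Hy. destruct (H x y Hy) as [A B].
  assert (Hf : f x y <> 0) by (specialize (Hb x y Hy); lra).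
  rewrite pdx_is_deriv0, pdy_is_deriv0 in *. split; apply is_deriv0_inv; auto.
  - intros h _ _. specialize (Hb (x + h) y Hy). lra.
  - intros h Hh _. specialize (Hb x (y + h) Hh). lra.
Qed.

Lemma partials_comp f a b X Xa Xb T Ta Tb :
  cont_strip f -> partials f a b -> cont_strip a -> cont_strip b ->
  partials X Xa Xb -> partials T Ta Tb -> (forall x y, in01 y -> in01 (T x y)) ->
  partials (fun x y => f (X x y) (T x y))
     (fun x y => a (X x y) (T x y) * Xa x y + b (X x y) (T x y) * Ta x y)
     (fun x y => a (X x y) (T x y) * Xb x y + b (X x y) (T x y) * Tb x y).
Proof.
  intros Hc Hp Ha Hb HX HT HI x y Hy.
  destruct (HX x y Hy) as [A1 B1]. destruct (HT x y Hy) as [A2 B2].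
  rewrite pdx_is_deriv0, pdy_is_deriv0 in *.
  split; apply is_deriv0_comp_strip; auto.
Qed.

Lemma Ck_const k : forall c, Ck k (fun _ _ => c).
Proof.
  induction k; intros c; simpl; [apply cont_strip_const|].
  split; [apply cont_strip_const|]. exists (fun _ _ => 0), (fun _ _ => 0).
  split; [apply partials_const | split; apply IHk].
Qed.

Lemma Ck_fst k : Ck k (fun x _ => x).
Proof.
  destruct k; simpl; [apply cont_strip_fst|].
  split; [apply cont_strip_fst|]. exists (fun _ _ => 1), (fun _ _ => 0).
  split; [apply partials_fst | split; apply Ck_const].
Qed.

Lemma Ck_snd k : Ck k (fun _ y => y).
Proof.
  destruct k; simpl; [apply cont_strip_snd|].
  split; [apply cont_strip_snd|]. exists (fun _ _ => 0), (fun _ _ => 1).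
  split; [apply partials_snd | split; apply Ck_const].
Qed.

Lemma Ck_plus k : forall f g, Ck k f -> Ck k g -> Ck k (fun x y => f x y + g x y).
Proof.
  induction k as [|k IH]; simpl; [apply cont_strip_plus|].
  intros f g [Hf [a [b [Hp [Ha Hb]]]]] [Hg [c [d [Hq [Hc Hd]]]]].
  split; [apply cont_strip_plus; auto|].
  eexists _, _. split; [apply partials_plus; eauto | split; apply IH; auto].
Qed.

Lemma Ck_opp k : forall f, Ck k f -> Ck k (fun x y => - f x y).
Proof.
  induction k as [|k IH]; simpl; [apply cont_strip_opp|].
  intros f [Hf [a [b [Hp [Ha Hb]]]]].
  split; [apply cont_strip_opp; auto|].
  eexists _, _. split; [apply partials_opp; eauto | split; apply IH; auto].
Qed.

Lemma Ck_mult k : forall f g, Ck k f -> Ck k g -> Ck k (fun x y => f x y * g x y).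
Proof.
  induction k as [|k IH]; simpl; [apply cont_strip_mult|].
  intros f g Hf' Hg'. pose proof (Ck_S k f Hf'). pose proof (Ck_S k g Hg').
  destruct Hf' as [Hf [a [b [Hp [Ha Hb]]]]]. destruct Hg' as [Hg [c [d [Hq [Hc Hd]]]]].
  split; [apply cont_strip_mult; auto|].
  eexists _, _. split; [apply partials_mult; eauto | split; apply Ck_plus; apply IH; auto].
Qed.

Lemma Ck_inv k c : 0 < c -> forall f, (forall x y, in01 y -> c <= f x y) -> Ck k f ->
  Ck k (fun x y => / f x y).
Proof.
  intros Hc. induction k as [|k IH]; simpl; intros f Hb Hf'.
  - apply (cont_strip_inv f c); auto.
  - assert (Hi := IH f Hb (Ck_S k f Hf')).
    destruct Hf' as [Hf [a [b [Hp [Ha Hb']]]]].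
    split; [apply (cont_strip_inv f c); auto|].
    eexists _, _. split; [apply (partials_inv f a b c); eauto|].
    split; apply Ck_opp; repeat apply Ck_mult; auto.
Qed.

Lemma Ck_comp k : forall f X T, Ck k f -> Ck k X -> Ck k T ->
  (forall x y, in01 y -> in01 (T x y)) -> Ck k (fun x y => f (X x y) (T x y)).
Proof.
  induction k as [|k IH]; simpl; [intros; apply cont_strip_comp; auto|].
  intros f X T Hf' HX' HT' HI.
  pose proof (Ck_S k X HX'). pose proof (Ck_S k T HT').
  destruct Hf' as [Hf [a [b [Hp [Ha Hb]]]]].
  destruct HX' as [HX [Xa [Xb [HpX [HXa HXb]]]]].
  destruct HT' as [HT [Ta [Tb [HpT [HTa HTb]]]]].
  split; [apply cont_strip_comp; auto|].
  eexists _, _. split; [apply partials_comp; eauto using Ck_cont|].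
  split; apply Ck_plus; apply Ck_mult; auto.
Qed.

(** * Mixed partials and jets *)

Section MixedPartials.

Variables u A B C E : R -> R -> R.
Hypotheses (u_cont : cont_strip u) (A_cont : cont_strip A)
  (C_cont : cont_strip C) (E_cont : cont_strip E)
  (u_dx : forall x y, in01 y -> pdx u x y (A x y))
  (u_dy : forall x y, in01 y -> pdy u x y (B x y))
  (A_dy : forall x y, in01 y -> pdy A x y (C x y))
  (B_dx : forall x y, in01 y -> pdx B x y (E x y)).

(* Four applications of the mean value theorem to the double difference
   u(x+h,y+k) - u(x+h,y) - u(x,y+k) + u(x,y), in both orders. *)
Lemma mixed_partials_meet x y d : in01 y -> 0 < d ->
  exists xi tau xi' tau', in01 tau /\ in01 tau' /\
    Rabs (xi - x) < d /\ Rabs (tau - y) < d /\ Rabs (xi' - x) < d /\ Rabs (tau' - y) < d /\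
    C xi tau = E xi' tau'.
Proof.
  intros Hy Hd.
  set (h := d / 2).
  set (k := if Rle_dec y (1/2) then Rmin (d/2) (1/2) else - Rmin (d/2) (1/2)).
  assert (Hk : k <> 0 /\ Rabs k < d /\ in01 (y + k)).
  { pose proof (Rmin_l (d/2) (1/2)); pose proof (Rmin_r (d/2) (1/2)).
    assert (0 < Rmin (d/2) (1/2)) by (apply Rmin_glb_lt; lra).
    unfold k, in01 in *; destruct Rle_dec; unfold Rabs; destruct Rcase_abs;
      repeat split; lra. }
  destruct Hk as [Hk0 [Hkd Hyk]].
  assert (Hh0 : h <> 0) by (unfold h; lra).
  assert (Hhd : Rabs h < d) by (unfold h; rewrite Rabs_pos_eq; lra).
  destruct (mvt_R (fun s => u s (y + k) - u s y) (fun s => A s (y + k) - A s y))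
    with (a := x) (b := x + h) as [xi [Xi1 Xi2]].
  { intros s. apply derivable_pt_lim_minus; apply pdx_derivable_pt_lim; auto. }
  destruct (mvt_unit_interval (A xi) (C xi)) with (a := y) (b := y + k)
    as [tau [T1 T2]]; auto.
  { apply cont_strip_section; auto. }
  { intros t Ht. apply A_dy. unfold in01; lra. }
  destruct (mvt_unit_interval (fun t => u (x + h) t + - u x t)
              (fun t => B (x + h) t + - B x t)) with (a := y) (b := y + k)
    as [tau' [T1' T2']]; auto.
  { apply cont_strip_plus; [|apply cont_strip_opp]; apply cont_strip_section; auto. }
  { intros t Ht. assert (Ht' : in01 t) by (unfold in01; lra).
    apply pdy_is_deriv0, is_deriv0_plus; [|apply is_deriv0_opp]; apply pdy_is_deriv0, u_dy; auto. }
  assert (Htau : in01 tau) by exact (in01_between _ _ _ Hy Hyk T1).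
  assert (Htau' : in01 tau') by exact (in01_between _ _ _ Hy Hyk T1').
  destruct (mvt_R (fun s => B s tau') (fun s => E s tau')) with (a := x) (b := x + h)
    as [xi' [Xi1' Xi2']].
  { intros s. apply pdx_derivable_pt_lim; auto. }
  pose proof (Rabs_between _ _ _ Xi1); pose proof (Rabs_between _ _ _ Xi1').
  pose proof (Rabs_between _ _ _ T1); pose proof (Rabs_between _ _ _ T1').
  replace (x + h - x) with h in H, H0, Xi2, Xi2' by ring.
  replace (y + k - y) with k in H1, H2, T2, T2' by ring.
  exists xi, tau, xi', tau'. do 2 (split; [assumption|]). repeat (split; [lra|]).
  apply Rmult_eq_reg_r with (k * h); [|apply Rmult_integral_contrapositive; auto].
  unfold Rminus in Xi2'. rewrite T2 in Xi2. rewrite Xi2' in T2'. lra.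
Qed.

Lemma mixed_partials_eq x y : in01 y -> C x y = E x y.
Proof.
  intros Hy. destruct (Req_dec (C x y) (E x y)) as [Q|Q]; auto. exfalso.
  assert (Hpos : 0 < Rabs (C x y - E x y)) by (apply Rabs_pos_lt; lra).
  set (e := Rabs (C x y - E x y) / 2).
  destruct (C_cont x y Hy e ltac:(unfold e; lra)) as [d1 [Hd1 A1]].
  destruct (E_cont x y Hy e ltac:(unfold e; lra)) as [d2 [Hd2 A2]].
  pose proof (Rmin_l d1 d2); pose proof (Rmin_r d1 d2).
  destruct (mixed_partials_meet x y (Rmin d1 d2) Hy ltac:(apply Rmin_glb_lt; auto))
    as [xi [tau [xi' [tau' [Ht [Ht' [B1 [B2 [B3 [B4 Eq]]]]]]]]]].
  specialize (A1 xi tau Ht ltac:(lra) ltac:(lra)).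
  specialize (A2 xi' tau' Ht' ltac:(lra) ltac:(lra)).
  rewrite Eq in A1.
  pose proof (Rabs_triang (E xi' tau' - E x y) (- (E xi' tau' - C x y))).
  rewrite Rabs_Ropp in H1.
  replace (E xi' tau' - E x y + - (E xi' tau' - C x y)) with (C x y - E x y) in H1 by ring.
  unfold e in *. lra.
Qed.

End MixedPartials.

Lemma Cs_jet_Ck s f D : Cs_jet s f D ->
  forall k i j, (i + j + k <= s)%nat -> Ck k (D i j).
Proof.
  intros [J1 [J2 J3]] k. induction k as [|k IH]; intros i j Hij; simpl.
  - apply J2. lia.
  - split; [apply J2; lia|]. exists (D (S i) j), (D i (S j)). split.
    + intros x y Hy. apply J3; auto. lia.
    + split; apply IH; lia.
Qed.

(* The jet of f is assembled from the jets of its partials a = ∂_ξ f and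
   b = ∂_η f: D (i+1) j comes from a, D 0 (j+1) from b; the two agree on
   ∂_ξ ∂_η^j f by Schwarz, proved by induction on j. *)
Lemma Ck_Cs_jet k : forall f, Ck k f -> exists D, Cs_jet k f D.
Proof.
  induction k as [|k IH]; intros f Hf.
  - exists (fun _ _ => f). split; [|split]; intros; auto; lia.
  - destruct Hf as [Hf [a [b [Hp [Ha Hb]]]]].
    destruct (IH a Ha) as [Da [A1 [A2 A3]]]. destruct (IH b Hb) as [Db [B1 [B2 B3]]].
    set (Dj := fun i j => match i, j with
                          | O, O => f | S i', _ => Da i' j | O, S j' => Db O j' end).
    assert (Cont : forall i j, (i + j <= S k)%nat -> cont_strip (Dj i j)).
    { intros [|i] [|j] Hij; simpl; auto; [apply B2 | apply A2 | apply A2]; lia. }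
    assert (Py : forall j, (j < S k)%nat -> forall x y, in01 y ->
                   pdy (Dj O j) x y (Dj O (S j) x y)).
    { intros [|j] Hj x y Hy; simpl.
      - rewrite B1 by auto. apply Hp; auto.
      - apply B3; auto. lia. }
    assert (Px : forall j, (j <= k)%nat -> forall x y, in01 y ->
                   pdx (Dj O j) x y (Da O j x y)).
    { induction j as [|j IHj]; intros Hj x y Hy.
      - simpl. rewrite A1 by auto. apply Hp; auto.
      - assert (Sw : Da O (S j) x y = Db 1%nat j x y).
        { apply (mixed_partials_eq (Dj O j) (Da O j) (Dj O (S j)) (Da O (S j)) (Db 1%nat j));
            try (apply Cont || apply A2 || apply B2; lia); try exact Hy;
            intros x' y' Hy'.
          - apply IHj; auto; lia.
          - apply Py; auto; lia.
          - apply A3; auto; lia.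
          - apply B3; auto; lia. }
        rewrite Sw. apply B3; auto; lia. }
    exists Dj. split; [reflexivity | split; [exact Cont|]].
    intros [|i] j Hij x y Hy.
    + split; [apply Px | apply Py]; auto; lia.
    + simpl. apply A3; auto. lia.
Qed.

(** * The implicit function theorem *)

Lemma cont_strip_punctured_x g x y : cont_strip g -> in01 y ->
  tends_to (punctured (fun _ => True)) (fun h => g (x + h) y) (g x y).
Proof.
  intros H Hy eps He. destruct (H x y Hy eps He) as [d [Hd A]]. exists d; split; auto.
  intros h [_ [_ B]]. apply A; auto.
  - replace (x + h - x) with h by ring; auto.
  - rewrite Rminus_diag, Rabs_R0; auto.
Qed.

Lemma cont_strip_punctured_y g x y : cont_strip g -> in01 y ->
  tends_to (punctured (fun h => in01 (y + h))) (fun h => g x (y + h)) (g x y).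
Proof.
  intros H Hy eps He. destruct (H x y Hy eps He) as [d [Hd A]]. exists d; split; auto.
  intros h [Hh [_ B]]. apply A; auto.
  - rewrite Rminus_diag, Rabs_R0; auto.
  - replace (y + h - y) with h by ring; auto.
Qed.

Section ImplicitFunction.

Variables (c X f a b t : R -> R -> R) (K q : R).
Hypotheses (f_cont : cont_strip f) (f_partials : partials f a b)
  (a_bound : forall x y, in01 y -> Rabs (a x y) <= K)
  (b_bound : forall x y, in01 y -> Rabs (b x y) <= q) (q_lt_1 : q < 1)
  (t_in01 : forall x y, in01 y -> in01 (t x y))
  (t_implicit : forall x y, in01 y -> t x y = c x y + f (X x y) (t x y)).

(* |Δt| <= |Δc| + K |ΔX| + q |Δt|. *)
Lemma implicit_cont : cont_strip c -> cont_strip X -> cont_strip t.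
Proof.
  intros Hc HX x y Hy eps He.
  assert (K0 : 0 <= K).
  { specialize (a_bound 0 0 in01_0). pose proof (Rabs_pos (a 0 0)). lra. }
  set (e := (1 - q) * eps / 2).
  assert (He0 : 0 < e) by (unfold e; nra).
  set (e' := e / (K + 1)).
  assert (He' : 0 < e') by (apply Rdiv_lt_0_compat; lra).
  assert (HKe : K * e' <= e) by (unfold e'; apply Rmult_le_reg_r with (K + 1);
    [lra | unfold Rdiv; rewrite Rmult_assoc, Rmult_assoc, Rinv_l; nra]).
  destruct (Hc x y Hy e He0) as [d1 [Hd1 A1]].
  destruct (HX x y Hy e' He') as [d2 [Hd2 A2]].
  exists (Rmin d1 d2); split; [apply Rmin_glb_lt; auto|].
  intros x' y' Hy' B1 B2.
  pose proof (Rmin_l d1 d2); pose proof (Rmin_r d1 d2).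
  specialize (A1 x' y' Hy' ltac:(lra) ltac:(lra)).
  specialize (A2 x' y' Hy' ltac:(lra) ltac:(lra)).
  pose proof (partials_lip_x f a b K f_cont f_partials a_bound
                (X x' y') (X x y) (t x' y') (t_in01 x' y' Hy')) as L1.
  pose proof (partials_lip_y f a b q f_cont f_partials b_bound
                (X x y) (t x' y') (t x y) (t_in01 x' y' Hy') (t_in01 x y Hy)) as L2.
  assert (Main : Rabs (t x' y' - t x y) <=
    Rabs (c x' y' - c x y) + K * Rabs (X x' y' - X x y) + q * Rabs (t x' y' - t x y)).
  { rewrite (t_implicit x' y' Hy') at 1. rewrite (t_implicit x y Hy) at 1.
    replace (c x' y' + f (X x' y') (t x' y') - (c x y + f (X x y) (t x y)))
      with ((c x' y' - c x y) + ((f (X x' y') (t x' y') - f (X x y) (t x' y'))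
             + (f (X x y) (t x' y') - f (X x y) (t x y)))) by ring.
    eapply Rle_trans; [apply Rabs_triang|]. rewrite Rplus_assoc. apply Rplus_le_compat_l.
    eapply Rle_trans; [apply Rabs_triang|]. lra. }
  assert (K * Rabs (X x' y' - X x y) <= K * e') by (apply Rmult_le_compat_l; lra).
  unfold e in *. nra.
Qed.

Hypotheses (a_cont : cont_strip a) (b_cont : cont_strip b).

Lemma partials_implicit ca cb Xa Xb :
  partials c ca cb -> partials X Xa Xb -> cont_strip t ->
  partials t
    (fun x y => (ca x y + a (X x y) (t x y) * Xa x y) * / (1 + - b (X x y) (t x y)))
    (fun x y => (cb x y + a (X x y) (t x y) * Xb x y) * / (1 + - b (X x y) (t x y))).
Proof.
  intros Hpc HpX Ht x y Hy.
  assert (b_lt_1 : forall x y, in01 y -> b x y < 1).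
  { intros x' y' Hy'. pose proof (Rle_abs (b x' y')). specialize (b_bound x' y' Hy'). lra. }
  destruct (Hpc x y Hy) as [C1 C2]. destruct (HpX x y Hy) as [X1 X2].
  rewrite pdx_is_deriv0, pdy_is_deriv0 in *. split.
  - apply (is_deriv0_implicit _ f a b f_cont f_partials a_cont b_cont
             (fun h => c (x + h) y) (fun h => X (x + h) y) (fun h => t (x + h) y)
             (c x y) (X x y) (t x y)); auto.
    apply cont_strip_punctured_x; auto.
  - apply (is_deriv0_implicit _ f a b f_cont f_partials a_cont b_cont
             (fun h => c x (y + h)) (fun h => X x (y + h)) (fun h => t x (y + h))
             (c x y) (X x y) (t x y)); auto.
    apply cont_strip_punctured_y; auto.
Qed.

Lemma implicit_Ck n : Ck (S n) c -> Ck (S n) X -> Ck n a -> Ck n b -> Ck (S n) t.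
Proof.
  intros Hc' HX' Ha Hb.
  pose proof Hc' as [Hc [ca [cb [Hpc [Hca Hcb]]]]].
  pose proof HX' as [HX [Xa [Xb [HpX [HXa HXb]]]]].
  assert (Tc : cont_strip t) by exact (implicit_cont Hc HX).
  assert (Den : forall x y, in01 y -> 1 - q <= 1 + - b (X x y) (t x y)).
  { intros x y Hy. pose proof (Rle_abs (b (X x y) (t x y))).
    specialize (b_bound (X x y) (t x y) (t_in01 x y Hy)). lra. }
  enough (G : forall k, (k <= S n)%nat -> Ck k t) by (apply G; lia).
  induction k as [|k IHk]; intros Hk; [exact Tc|].
  assert (Tk := IHk ltac:(lia)). split; auto.
  assert (Low : forall g, Ck n g -> Ck k g) by (intros; apply (Ck_le _ n); auto; lia).
  assert (HXk : Ck k X) by (apply (Ck_le _ (S n)); auto; lia).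
  assert (HaXt : Ck k (fun x y => a (X x y) (t x y))) by (apply Ck_comp; auto).
  assert (Hdenom : Ck k (fun x y => / (1 + - b (X x y) (t x y)))).
  { apply (Ck_inv _ (1 - q)); [lra | exact Den|].
    apply Ck_plus; [apply Ck_const | apply Ck_opp, Ck_comp; auto]. }
  eexists _, _. split; [apply partials_implicit; eauto|].
  split; apply Ck_mult; auto; apply Ck_plus; auto; apply Ck_mult; auto.
Qed.

End ImplicitFunction.

Lemma contraction_fixed_unique (g : R -> R) q c t1 t2 : q < 1 ->
  (forall u v, in01 u -> in01 v -> Rabs (g u - g v) <= q * Rabs (u - v)) ->
  in01 t1 -> in01 t2 -> t1 = c + g t1 -> t2 = c + g t2 -> t1 = t2.
Proof.
  intros Hq L H1 H2 E1 E2. specialize (L t1 t2 H1 H2).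
  replace (g t1 - g t2) with (t1 - t2) in L by lra.
  pose proof (Rabs_pos (t1 - t2)).
  destruct (Req_dec t1 t2) as [|Hne]; auto.
  pose proof (Rabs_pos_lt (t1 - t2) ltac:(lra)). nra.
Qed.

(* The Lipschitz bound only serves continuity: as g vanishes at both ends,
   t - c - g t changes sign on [0,1]. *)
Lemma boundary_fixed_exists (g : R -> R) q c : q < 1 ->
  (forall u v, in01 u -> in01 v -> Rabs (g u - g v) <= q * Rabs (u - v)) ->
  g 0 = 0 -> g 1 = 0 -> in01 c -> exists t, in01 t /\ t = c + g t.
Proof.
  intros Hq L G0 G1 Hc.
  pose proof in01_0; pose proof in01_1.
  set (psi := fun z => z - c - g (clamp01 z)).
  assert (Cp : continuity psi).
  { intros z eps He. exists (eps / 2); split; [lra|].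
    intros w [_ Hw]. change (Rabs (psi w - psi z) < eps). change (Rabs (w - z) < eps / 2) in Hw.
    pose proof (L (clamp01 w) (clamp01 z) (clamp01_in01 w) (clamp01_in01 z)).
    pose proof (clamp01_lip w z). pose proof (Rabs_pos (clamp01 w - clamp01 z)).
    unfold psi.
    replace (w - c - g (clamp01 w) - (z - c - g (clamp01 z)))
      with ((w - z) + - (g (clamp01 w) - g (clamp01 z))) by ring.
    eapply Rle_lt_trans; [apply Rabs_triang|]. rewrite Rabs_Ropp. nra. }
  destruct (IVT_cor psi 0 1 Cp) as [z [Hz Ez]].
  - lra.
  - unfold psi. rewrite !clamp01_id, G0, G1 by auto. unfold in01 in Hc. nra.
  - exists z. assert (Iz : in01 z) by (unfold in01; lra). split; auto.
    unfold psi in Ez. rewrite clamp01_id in Ez by auto. lra.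
Qed.

Lemma periodic1_nat rho : periodic1 rho ->
  forall m x y, in01 y -> rho (x + INR m) y = rho x y.
Proof.
  intros Hp m. induction m as [|m IH]; intros x y Hy.
  - rewrite Rplus_0_r; auto.
  - rewrite S_INR, <- Rplus_assoc, Hp; auto.
Qed.

Lemma periodic1_Z rho : periodic1 rho ->
  forall k x y, in01 y -> rho (x + IZR k) y = rho x y.
Proof.
  intros Hp k x y Hy. destruct (Z_le_gt_dec 0 k) as [Hk|Hk].
  - rewrite <- (Z2Nat.id k Hk), <- INR_IZR_INZ. apply periodic1_nat; auto.
  - assert (Ek : IZR k = - INR (Z.to_nat (- k))).
    { rewrite INR_IZR_INZ, Z2Nat.id, opp_IZR by lia. ring. }
    rewrite <- (periodic1_nat rho Hp (Z.to_nat (- k)) (x + IZR k) y Hy), Ek.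
    f_equal. ring.
Qed.

(** * The twist map *)

Section Twist.

Variables (n : nat) (rho a b : R -> R -> R).
Hypotheses (rho_periodic : periodic1 rho) (rho_Ck : Ck (S n) rho)
  (rho_partials : partials rho a b) (a_Ck : Ck n a) (b_Ck : Ck n b)
  (a_small : forall x y, in01 y -> Rabs (a x y) <= 1/4)
  (b_small : forall x y, in01 y -> Rabs (b x y) <= 1/4)
  (rho_boundary : forall x, rho x 0 = 0 /\ rho x 1 = 0).

(* [twist 1] is F_ρ and [twist (-1)] its inverse. *)
Definition twist_x (sg x y : R) := x + sg * y + rho x y.

Definition twist_y_spec (sg x y t : R) :=
  in01 t /\ t = y + sg * rho x y + sg * rho (twist_x sg x y) t.

Definition twist_y (sg x y : R) := epsilon (inhabits 0) (twist_y_spec sg x y).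

Definition twist (sg x y : R) := (twist_x sg x y, twist_y sg x y).

Lemma rho_lip_y u t1 t2 : in01 t1 -> in01 t2 ->
  Rabs (rho u t1 - rho u t2) <= 1/4 * Rabs (t1 - t2).
Proof. apply (partials_lip_y rho a b); auto. exact (Ck_cont _ _ rho_Ck). Qed.

Lemma signed_rho_lip_y sg : sg = 1 \/ sg = -1 -> forall u t1 t2, in01 t1 -> in01 t2 ->
  Rabs (sg * rho u t1 - sg * rho u t2) <= 1/4 * Rabs (t1 - t2).
Proof.
  intros Hsg u t1 t2 H1 H2.
  assert (Hs : Rabs sg = 1) by (destruct Hsg; subst; unfold Rabs; destruct Rcase_abs; lra).
  rewrite <- Rmult_minus_distr_l, Rabs_mult, Hs, Rmult_1_l. apply rho_lip_y; auto.
Qed.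

Lemma in01_shift sg x y : sg = 1 \/ sg = -1 -> in01 y -> in01 (y + sg * rho x y).
Proof.
  intros Hsg Hy. destruct (rho_boundary x) as [E0 E1].
  pose proof (rho_lip_y x y 0 Hy in01_0) as L0.
  pose proof (rho_lip_y x 1 y in01_1 Hy) as L1.
  rewrite E0, !Rminus_0_r in L0. rewrite E1, Rminus_0_l, Rabs_Ropp in L1.
  unfold in01 in *. rewrite (Rabs_pos_eq y) in L0 by lra.
  rewrite (Rabs_pos_eq (1 - y)) in L1 by lra.
  destruct Hsg; subst; unfold Rabs in *; destruct Rcase_abs; lra.
Qed.

Lemma twist_y_eq sg x y : sg = 1 \/ sg = -1 -> in01 y ->
  twist_y_spec sg x y (twist_y sg x y).
Proof.
  intros Hsg Hy. unfold twist_y. apply epsilon_spec.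
  destruct (rho_boundary (twist_x sg x y)) as [E0 E1].
  apply (boundary_fixed_exists (fun t => sg * rho (twist_x sg x y) t) (1/4)).
  - lra.
  - apply signed_rho_lip_y; auto.
  - rewrite E0; ring.
  - rewrite E1; ring.
  - apply in01_shift; auto.
Qed.

Lemma twist_y_unique sg x y t : sg = 1 \/ sg = -1 -> in01 y ->
  twist_y_spec sg x y t -> twist_y sg x y = t.
Proof.
  intros Hsg Hy [Ht Et]. destruct (twist_y_eq sg x y Hsg Hy) as [Hs Es].
  apply (contraction_fixed_unique (fun t => sg * rho (twist_x sg x y) t) (1/4)
           (y + sg * rho x y)); auto; [lra | apply signed_rho_lip_y; auto].
Qed.

Lemma twist_y_boundary sg x : sg = 1 \/ sg = -1 ->
  twist_y sg x 0 = 0 /\ twist_y sg x 1 = 1.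
Proof.
  intros Hsg. destruct (rho_boundary x) as [E0 E1].
  split; apply twist_y_unique; auto using in01_0, in01_1; split; auto using in01_0, in01_1.
  - rewrite E0, (proj1 (rho_boundary _)). ring.
  - rewrite E1, (proj2 (rho_boundary _)). ring.
Qed.

Lemma twist_periodic sg x y : sg = 1 \/ sg = -1 -> in01 y ->
  twist_x sg (x + 1) y = twist_x sg x y + 1 /\ twist_y sg (x + 1) y = twist_y sg x y.
Proof.
  intros Hsg Hy.
  assert (EX : twist_x sg (x + 1) y = twist_x sg x y + 1).
  { unfold twist_x. rewrite rho_periodic by auto. ring. }
  split; auto. destruct (twist_y_eq sg x y Hsg Hy) as [Ht Et].
  apply twist_y_unique; auto. split; auto.
  rewrite EX, rho_periodic, rho_periodic; auto.
Qed.

Lemma twist_Amap sg : sg = 1 \/ sg = -1 -> Amap (twist sg).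
Proof.
  intros Hsg x y Hy. destruct (twist_periodic sg x y Hsg Hy) as [EX EY]. simpl.
  split; [apply twist_y_eq; auto|]. split; auto.
  exists 1%Z. rewrite EX. simpl. ring.
Qed.

Lemma twist_twist sg x y : sg = 1 \/ sg = -1 -> in01 y ->
  twist_x (- sg) (twist_x sg x y) (twist_y sg x y) = x /\
  twist_y (- sg) (twist_x sg x y) (twist_y sg x y) = y.
Proof.
  intros Hsg Hy. destruct (twist_y_eq sg x y Hsg Hy) as [Ht Et].
  assert (EX : twist_x (- sg) (twist_x sg x y) (twist_y sg x y) = x).
  { unfold twist_x in *. destruct Hsg; subst; lra. }
  split; auto. apply twist_y_unique; auto.
  - destruct Hsg; subst; [right | left]; ring.
  - split; auto. rewrite EX. destruct Hsg; subst; lra.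
Qed.

Lemma twist_Cs_Amap : Cs_Amap (S n) (twist 1).
Proof.
  assert (H1 : 1 = 1 \/ 1 = -1) by auto.
  assert (HX : Ck (S n) (twist_x 1)).
  { unfold twist_x. apply Ck_plus; [apply Ck_plus|]; auto using Ck_fst, Ck_mult, Ck_const, Ck_snd. }
  split; [apply twist_Amap; auto|]. split; apply Ck_Cs_jet; [exact HX|].
  assert (Hc : Ck (S n) (fun x y => y + 1 * rho x y)).
  { apply Ck_plus; auto using Ck_snd, Ck_mult, Ck_const. }
  assert (Ht : forall x y, in01 y ->
    twist_y 1 x y = (y + 1 * rho x y) + rho (twist_x 1 x y) (twist_y 1 x y)).
  { intros x y Hy. destruct (twist_y_eq 1 x y H1 Hy) as [_ E]. rewrite E at 1. ring. }
  assert (Hin : forall x y, in01 y -> in01 (twist_y 1 x y)).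
  { intros x y Hy. exact (proj1 (twist_y_eq 1 x y H1 Hy)). }
  exact (implicit_Ck _ _ rho a b _ (1/4) (1/4) (Ck_cont _ _ rho_Ck) rho_partials
           a_small b_small ltac:(lra) Hin Ht (Ck_cont _ _ a_Ck) (Ck_cont _ _ b_Ck)
           n Hc HX a_Ck b_Ck).
Qed.

Lemma twist_is_F : is_F (S n) rho (twist 1).
Proof.
  assert (H1 : 1 = 1 \/ 1 = -1) by auto.
  split; [exact twist_Cs_Amap | split].
  - intros x. split; simpl; [|apply twist_y_boundary; auto].
    exists 0%Z. unfold twist_x. rewrite (proj1 (rho_boundary x)). ring.
  - intros x y Hy. destruct (twist_y_eq 1 x y H1 Hy) as [_ E]. split; simpl.
    + exists 0%Z. unfold twist_x. ring.
    + rewrite E at 1. ring.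
Qed.

Lemma is_F_unique s G : is_F s rho G -> Amap_eq (twist 1) G.
Proof.
  intros [[GA _] [_ GE]] x y Hy.
  destruct (GE x y Hy) as [[k Hk] E]. destruct (GA x y Hy) as [Hin _].
  assert (EX : fst (G x y) = twist_x 1 x y + IZR k) by (unfold twist_x; lra).
  split; simpl.
  - exists (- k)%Z. rewrite opp_IZR. lra.
  - apply twist_y_unique; auto. split; auto.
    rewrite E at 1. rewrite EX, periodic1_Z; auto. ring.
Qed.

Lemma twist_boundary_1 x : Apt_eq (twist 1 x 1) (x, 1).
Proof.
  split; simpl; [|apply twist_y_boundary; auto].
  exists 1%Z. unfold twist_x. rewrite (proj2 (rho_boundary x)). ring.
Qed.

Lemma twist_inverse x y : in01 y ->
  Apt_eq (twist 1 (twist_x (-1) x y) (twist_y (-1) x y)) (x, y) /\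
  Apt_eq (twist (-1) (twist_x 1 x y) (twist_y 1 x y)) (x, y).
Proof.
  intros Hy.
  destruct (twist_twist (-1) x y (or_intror eq_refl) Hy) as [A1 A2].
  destruct (twist_twist 1 x y (or_introl eq_refl) Hy) as [B1 B2].
  replace (- -1) with 1 in A1, A2 by ring. replace (Ropp 1) with (-1) in B1, B2 by ring.
  split; split; simpl; auto; exists 0%Z; [rewrite A1 | rewrite B1]; ring.
Qed.

Lemma twist_inverse_eq x y : in01 y ->
  eqmod1 (twist_x (-1) x y) (x - y + rho x y) /\
  twist_y (-1) x y = y - rho x y - rho (twist_x (-1) x y) (twist_y (-1) x y).
Proof.
  intros Hy. destruct (twist_y_eq (-1) x y (or_intror eq_refl) Hy) as [_ E]. split.
  - exists 0%Z. unfold twist_x. ring.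
  - rewrite E at 1. ring.
Qed.

End Twist.

Theorem lemmaA1 :
  forall s : nat, (2 <= s)%nat ->
  exists eps : R, 0 < eps /\
  forall (rho : R -> R -> R) (D : nat -> nat -> R -> R -> R),
    periodic1 rho ->
    Cs_jet s rho D ->
    (forall x, rho x 0 = 0 /\ rho x 1 = 0) ->
    (forall i j x y, (i + j <= s)%nat -> in01 y -> Rabs (D i j x y) <= eps) ->
    exists F : R -> R -> R * R,
      is_F s rho F /\
      (forall G, is_F s rho G -> Amap_eq F G) /\
      (forall x, Apt_eq (F x 1) (x, 1)) /\
      exists Finv : R -> R -> R * R,
        Amap Finv /\
        (forall x y, in01 y ->
           Apt_eq (F (fst (Finv x y)) (snd (Finv x y))) (x, y) /\
           Apt_eq (Finv (fst (F x y)) (snd (F x y))) (x, y)) /\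
        (forall x y, in01 y ->
           eqmod1 (fst (Finv x y)) (x - y + rho x y) /\
           snd (Finv x y) = y - rho x y - rho (fst (Finv x y)) (snd (Finv x y))).
Proof.
  intros s Hs. exists (1/4). split; [lra|].
  intros rho D Hper Hjet Hedge Hbnd.
  destruct s as [|n]; [lia|].
  assert (Hrho : Ck (S n) rho).
  { apply (Ck_ext _ (D 0%nat 0%nat)); [apply Hjet | apply (Cs_jet_Ck _ _ _ Hjet); lia]. }
  assert (Hpart : partials rho (D 1%nat 0%nat) (D 0%nat 1%nat)).
  { apply (partials_ext (D 0%nat 0%nat)); [apply Hjet|].
    intros x y Hy. apply Hjet; auto; lia. }
  assert (Ha : Ck n (D 1%nat 0%nat)) by (apply (Cs_jet_Ck _ _ _ Hjet); lia).
  assert (Hb : Ck n (D 0%nat 1%nat)) by (apply (Cs_jet_Ck _ _ _ Hjet); lia).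
  assert (Ba : forall x y, in01 y -> Rabs (D 1%nat 0%nat x y) <= 1/4)
    by (intros; apply Hbnd; auto; lia).
  assert (Bb : forall x y, in01 y -> Rabs (D 0%nat 1%nat x y) <= 1/4)
    by (intros; apply Hbnd; auto; lia).
  exists (twist rho 1). split; [|split; [|split]].
  - eapply twist_is_F; eauto.
  - intros G HG. eapply is_F_unique; eauto.
  - intros x. eapply twist_boundary_1; eauto.
  - exists (twist rho (-1)). split; [|split].
    + eapply twist_Amap; eauto.
    + intros x y Hy. eapply twist_inverse; eauto.
    + intros x y Hy. eapply twist_inverse_eq; eauto.
Qed.
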